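(* Consider Algorithm F (Filter) run on an input set $S$ of initial size $m$ and a hypothesis $h$. In each iteration of its while-loop in which the support instances $x^-,x^+$ are identified, with probability at least $1-\frac{1}{m^{50}}$ the interval $[x^-,x^+]$ (with respect to the ordering induced by $Z^*$) contains less than a $1/2$ fraction of the unfiltered instances (the instances currently in $S$).
   Context: Instances lie in $\mathbb{R}^d$ and are totally ordered by the ground-truth comparison function $Z^*(x,x')=\mathrm{sign}(w^*\cdot(x-x'))$, where $h^*(x)=\mathrm{sign}(w^*\cdot x)$ is the target halfspace. Oracle $\mathcal{O}_L$ on input $x$ returns (from a fresh random worker) $h^*(x)$ with probability $\ge\frac12+\alpha$; oracle $\mathcal{O}_C$ on $(x,x')$ returns $Z^*(x,x')$ with probability $\ge\frac12+\beta$; $\alpha,\beta\in(0,\frac12]$. Algorithm A (Compare-and-Label) on $(S,\delta)$: sorts $S$ by randomized quicksort with each comparison decided by majority of $O(\beta^{-2}\log(|S|/\delta))$ calls to $\mathcal{O}_C$, then binary searches the sorted list for the $-1/+1$ threshold labeling probed instances by majority of $O(\alpha^{-2}\log(\log|S|/\delta))$ calls to $\mathcal{O}_L$, and labels accordingly. Algorithm F (Filter) on input a set $S$ (initial size $m$) and hypothesis $h$: $b=100\log m$, $\delta'=0.001/\log m$, $N=O(\log(1/\epsilon))$, $S_I=\emptyset$. While $S\neq\emptyset$: if $|S|\le b$, run Algorithm A on $(S,\delta')$, add to $S_I$ the instances whose label differs from $h$, and stop. Otherwise sample uniformly a subset $S_p\subset S$ of $b$ points, run Algorithm A on $(S_p,\delta')$,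 let $x^-$ (support instance) be the rightmost instance of $S_p$ labeled $-1$ and $x^+$ the leftmost labeled $+1$. For each $x\in S\setminus S_p$: for $t=1,\dots,N$, obtain from a fresh worker tags $Z_t(x,x^-)$, $Z_t(x,x^+)$; for odd $t$: if $\mathrm{Maj}(Z_{1:t}(x,x^-))=1$ and $\mathrm{Maj}(Z_{1:t}(x,x^+))=-1$, stop processing $x$ (it stays in $S$); else if [$\mathrm{Maj}(Z_{1:t}(x,x^-))=-1$ and $h(x)=-1$] or [$\mathrm{Maj}(Z_{1:t}(x,x^+))=+1$ and $h(x)=+1$], put $x$ in $S'$ and stop. If all $N$ rounds pass without stopping, put $x$ into $S_I$. Remove $S_I\cup S'\cup S_p$ from $S$. Return $S_I$.
   Formalization: The probability is only over the uniform b-point sample $S_p$ of the current $S$, and $x^-$, $x^+$ are the $Z^*$-rightmost sampled point with $h^*=-1$ and leftmost with $h^*=+1$ (Algorithm A correct); b = ⌈100 ln m⌉. Apart from conventions, each condition added here is assumed in the paper as well or is needed for the statement above to hold. *)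

From HB Require Import structures.
From mathcomp Require Import all_boot all_order all_algebra.
From mathcomp Require Import all_classical all_reals all_analysis.
Set Implicit Arguments. Unset Strict Implicit. Unset Printing Implicit Defensive.
Import Order.TTheory GRing.Theory Num.Theory.
Local Open Scope ring_scope.

Section FilterDefs.
Variables (R : realType) (d : nat).

(* w* . x : the score inducing the ground-truth order Z* *)
Definition score (w x : 'rV[R]_d) : R := \sum_(i < d) w 0 i * x 0 i.

(* h*(x) = +1  <->  hstar w x = true ;  h*(x) = -1  <->  hstar w x = false *)
Definition hstar (w x : 'rV[R]_d) : bool := 0 < score w x.

(* Parameter b = 100 log m of Algorithm F (natural log, rounded up). *)
Definition filter_b (m : nat) : nat := `|Num.ceil (100 * ln (m%:R : R))|%N.

Variables (w : 'rV[R]_d) (s : seq 'rV[R]_d).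
Let n := size s.
Definition pt (i : 'I_n) : 'rV[R]_d := nth 0 s i.
Definition sc (i : 'I_n) : R := score w (pt i).
Definition lab (i : 'I_n) : bool := hstar w (pt i).

Definition is_support_minus (Sp : {set 'I_n}) (i : 'I_n) : bool :=
  [&& i \in Sp, ~~ lab i & [forall j in Sp, ~~ lab j ==> (sc j <= sc i)]].
Definition is_support_plus (Sp : {set 'I_n}) (i : 'I_n) : bool :=
  [&& i \in Sp, lab i & [forall j in Sp, lab j ==> (sc i <= sc j)]].

Definition interval_count (im ip : 'I_n) : nat :=
  #|[set j : 'I_n | (sc im <= sc j) && (sc j <= sc ip)]|.

Definition bad_sample (Sp : {set 'I_n}) : bool :=
  [exists im, exists ip,
     [&& is_support_minus Sp im, is_support_plus Sp ip &
         (n <= 2 * interval_count im ip)%N]].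

End FilterDefs.

From HB Require Import structures.
From mathcomp Require Import all_boot all_order all_algebra.
From mathcomp Require Import all_classical all_reals all_analysis.
From mathcomp Require Import unstable zify ring lra.
Import Order.TTheory GRing.Theory Num.Theory.
Local Open Scope ring_scope.

(* Every sample point labelled -1 lies at or left of x^-, every one labelled
   +1 at or right of x^+, so a sample never meets the open interval
   (x^-, x^+). If the sample is bad this interval holds at least n/2 - 2 of
   the n instances, so a bad b-sample lies in the complement (of size about
   n/2) of one of at most n^2 intervals. The bad fraction is therefore at
   most n^2 ((n + 5) / 2n)^b <= m^2 e^5 2^-b, and b >= 100 ln m makes this
   at most m^-50. *)

Section SupportInterval.
Variables (R : realType) (d : nat) (w : 'rV[R]_d) (s : seq 'rV[R]_d).
Hypotheses (s_uniq : uniq s) (score_inj : {in s &, injective (score w)}).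
Let n := size s.

Definition strictly_between (im ip : 'I_n) : {set 'I_n} :=
  [set j | (sc w im < sc w j) && (sc w j < sc w ip)].

Lemma sc_inj : injective (sc w (s:=s)).
Proof.
move=> i j eij; apply/val_inj/eqP.
rewrite -(nth_uniq 0 _ _ s_uniq) ?ltn_ord //; apply/eqP.
by apply: score_inj; rewrite ?mem_nth ?ltn_ord.
Qed.

Lemma sample_avoids_between Sp im ip :
  is_support_minus w Sp im -> is_support_plus w Sp ip ->
  Sp \subset ~: strictly_between im ip.
Proof.
move=> /and3P[_ _ /forallP below_im] /and3P[_ _ /forallP above_ip].
apply/fintype.subsetP => j jSp; rewrite !inE negb_and -!leNgt.
move: (below_im j) (above_ip j); rewrite jSp /=.
by case: (lab w j) => /= [_ ->|-> _]; rewrite ?orbT.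
Qed.

Lemma interval_count_le im ip :
  (interval_count w im ip <= #|strictly_between im ip| + 2)%N.
Proof.
have closed_sub : [set j | (sc w im <= sc w j) && (sc w j <= sc w ip)]
    \subset strictly_between im ip :|: [set im; ip].
  apply/fintype.subsetP => j; rewrite !inE !le_eqVlt.
  case/andP=> [/predU1P[/sc_inj <-|lt_im] /predU1P[/sc_inj ->|lt_ip]];
    by rewrite ?eqxx ?orbT // lt_im lt_ip.
apply: leq_trans (subset_leq_card closed_sub) _.
apply: leq_trans (leq_card_setU _ _).1 _.
by rewrite leq_add2l cards2; case: (im != ip).
Qed.

Lemma bad_sample_avoids_large_between Sp : bad_sample w Sp ->
  exists im ip, Sp \subset ~: strictly_between im ip /\
                (#|~: strictly_between im ip| <= n - (n - 4) %/ 2)%N.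
Proof.
move=> /existsP[im /existsP[ip /and3P[Sp_im Sp_ip half_in]]].
exists im, ip; split; first exact: sample_avoids_between.
have := cardsC (strictly_between im ip); rewrite card_ord.
have := interval_count_le im ip; rewrite -/n in half_in *; lia.
Qed.

Lemma card_bad_samples b :
  (#|[set Sp : {set 'I_n} | (#|Sp| == b) && bad_sample w Sp]|
    <= n * n * 'C(n - (n - 4) %/ 2, b))%N.
Proof.
set a := (n - (n - 4) %/ 2)%N.
pose samples_outside (p : 'I_n * 'I_n) : {set {set 'I_n}} :=
  if (#|~: strictly_between p.1 p.2| <= a)%N then
    [set A : {set 'I_n} | A \subset ~: strictly_between p.1 p.2 & #|A| == b]
  else finset.set0.
have bad_sub : [set Sp : {set 'I_n} | (#|Sp| == b) && bad_sample w Sp]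
    \subset \bigcup_p samples_outside p.
  apply/fintype.subsetP => Sp; rewrite inE => /andP[/eqP card_Sp /bad_sample_avoids_large_between].
  case=> im [ip [Sp_out small]]; apply/bigcupP; exists (im, ip) => //.
  by rewrite /samples_outside /= small inE Sp_out card_Sp eqxx.
apply: leq_trans (subset_leq_card bad_sub) _.
apply: leq_trans (card_big_setU _ _ _) _.
have -> : (n * n * 'C(a, b) = \sum_(p : 'I_n * 'I_n) 'C(a, b))%N.
  by rewrite sum_nat_const card_prod card_ord.
apply: leq_sum => p _; rewrite /samples_outside.
by case: ifP => small; rewrite ?cards0 // cards_draws leq_bin2l.
Qed.

End SupportInterval.

Lemma ffact_mul_expn_le a n b : (a <= n)%N -> (a ^_ b * n ^ b <= n ^_ b * a ^ b)%N.
Proof.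
move=> a_le_n; elim: b => [|b IHb]; first by rewrite !ffactn0.
rewrite !ffactnSr !expnS.
have step : ((a - b) * n <= (n - b) * a)%N by nia.
have -> : (a ^_ b * (a - b) * (n * n ^ b) = a ^_ b * n ^ b * ((a - b) * n))%N by ring.
have -> : (n ^_ b * (n - b) * (a * a ^ b) = n ^_ b * a ^ b * ((n - b) * a))%N by ring.
exact: leq_mul IHb step.
Qed.

Lemma bin_ratio_le (R : realFieldType) a n b : (a <= n)%N ->
  'C(a, b)%:R / 'C(n, b)%:R <= (a%:R / n%:R) ^+ b :> R.
Proof.
move=> a_le_n; have [b_le_n | n_lt_b] := leqP b n; last first.
  by rewrite (bin_small n_lt_b) invr0 mulr0 exprn_ge0 // divr_ge0.
have Cn_gt0 : (0 : R) < 'C(n, b)%:R by rewrite ltr0n bin_gt0.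
have nb_gt0 : (0 : R) < n%:R ^+ b.
  by rewrite -natrX ltr0n expn_gt0; case: (posnP b) => [_|/leq_trans->]; rewrite ?orbT.
have : ('C(a, b) * n ^ b <= 'C(n, b) * a ^ b)%N.
  have := @ffact_mul_expn_le a n b a_le_n; rewrite -!bin_ffact.
  by rewrite mulnAC [X in (_ <= X)%N -> _]mulnAC leq_pmul2r ?fact_gt0.
rewrite -(ler_nat R) !natrM !natrX => cross.
by rewrite expr_div_n ler_pdivrMr // mulrAC ler_pdivlMr // [X in _ <= X]mulrC.
Qed.

Lemma ln2_ge (R : realType) : 5 / 8 <= ln (2 : R).
Proof.
have e_ge : 7 / 8 <= expR (- (1 / 8) : R) by apply: le_trans (expR_ge1Dx _); lra.
have half_le : 1 / 2 <= expR (- (5 / 8) : R).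
  have -> : expR (- (5 / 8) : R) = expR (- (1 / 8)) ^+ 5.
    by rewrite -expRM_natl; congr expR; lra.
  have : (7 / 8 : R) ^+ 5 <= expR (- (1 / 8)) ^+ 5.
    by apply: lerXn2r; rewrite ?nnegrE ?expR_ge0 //; lra.
  by apply: le_trans; rewrite !exprS expr0; lra.
have : ln (1 / 2 : R) <= - (5 / 8).
  by rewrite -[X in _ <= X]expRK ler_ln ?posrE ?expR_gt0 //; lra.
rewrite mul1r lnV ?posrE //; lra.
Qed.

Lemma ratio_le_expR (R : realType) (N A : R) : 0 < N -> 2 * A <= N + 5 ->
  A / N <= expR (5 / N - ln 2).
Proof.
move=> N_gt0 A_le; rewrite expRD expRN lnK ?posrE // ler_pdivrMr //.
have := expR_ge1Dx (5 / N); have : 5 / N * N = 5 by field; rewrite gt_eqF.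
set t := 5 / N; set E := expR t; nra.
Qed.

Lemma union_bound_le (R : realType) (m n b a : nat) :
  (2 <= m)%N -> (n <= m)%N -> (b <= n)%N -> (2 * a <= n + 5)%N ->
  100 * ln (m%:R : R) <= b%:R ->
  n%:R ^+ 2 * (a%:R / n%:R) ^+ b <= ((m%:R : R) ^+ 50)^-1.
Proof.
move=> m_ge2 n_le_m b_le_n a_le.
have [->|n_gt0] := posnP n; first by rewrite expr0n mul0r invr_ge0 exprn_ge0.
set x : R := m%:R; set N : R := n%:R; set B : R := b%:R; set A : R := a%:R.
have x_ge2 : 2 <= x by rewrite ler_nat.
have N_gt0 : 0 < N by rewrite ltr0n.
have N_le_x : N <= x by rewrite ler_nat.
have B_le_N : B <= N by rewrite ler_nat.
have A_le : 2 * A <= N + 5 by rewrite -natrM -natrD ler_nat.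
have l_ge := ln2_ge R.
have l_le_L : ln 2 <= ln x by rewrite ler_ln ?posrE //; lra.
move=> B_ge; set L := ln x in l_le_L B_ge *.
set l := ln (2 : R) in l_ge l_le_L *.
have pow_le : (A / N) ^+ b <= expR (B * (5 / N - l)).
  rewrite expRM_natl; apply: lerXn2r; rewrite ?nnegrE ?expR_ge0 ?divr_ge0 //.
  exact: ratio_le_expR.
have sqr_le : N ^+ 2 <= expR (2 * L).
  rewrite expRM_natl /L lnK ?posrE; last lra.
  by apply: lerXn2r; rewrite ?nnegrE; lra.
have -> : (x ^+ 50)^-1 = expR (- (50 * L)).
  by rewrite expRN expRM_natl /L lnK // posrE; lra.
apply: le_trans (ler_pM _ _ sqr_le pow_le) _; rewrite ?exprn_ge0 ?divr_ge0 //.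
rewrite -expRD ler_expR.
(* [b ln 2 >= 62.5 ln m] and [ln m >= 5/8] give [2 ln m + 5 - b ln 2 <= -50 ln m]. *)
have : B * (5 / N) <= 5 by rewrite mulrA ler_pdivrMr // mulrC ler_pM2l.
have : 0 <= (B - 100 * L) * l by apply: mulr_ge0; lra.
have : 0 <= (l - 5 / 8) * L by apply: mulr_ge0; lra.
nra.
Qed.

Lemma filter_b_ge (R : realType) m : (0 < m)%N ->
  100 * ln (m%:R : R) <= (filter_b R m)%:R.
Proof.
move=> m_gt0; have ln_ge0 : 0 <= ln (m%:R : R) by rewrite ln_ge0 // ler1n.
by rewrite /filter_b natr_absz ger0_norm ?ceil_ge // ceil_ge0; lra.
Qed.

Theorem lemma12 (R : realType) (d : nat) (w : 'rV[R]_d) (m : nat)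
    (s : seq 'rV[R]_d) :
  uniq s ->
  {in s &, injective (score w)} ->
  (size s <= m)%N ->
  (filter_b R m < size s)%N ->
  (#|[set Sp : {set 'I_(size s)} |
        (#|Sp| == filter_b R m) && bad_sample w Sp]|%:R : R)
    / ('C(size s, filter_b R m))%:R
  <= ((m%:R : R) ^+ 50)^-1.
Proof.
move=> s_uniq score_inj; set n := size s; set b := filter_b R m.
move=> n_le_m b_lt_n; set a := (n - (n - 4) %/ 2)%N.
have Cnb_gt0 : (0 : R) < 'C(n, b)%:R by rewrite ltr0n bin_gt0 ltnW.
apply: le_trans (_ : (n * n * 'C(a, b))%:R / 'C(n, b)%:R <= _).
  by rewrite ler_pM2r ?invr_gt0 // ler_nat card_bad_samples.
have [m_le1 | m_ge2] := leqP m 1.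
  have [n1 [m1 b0]] : n = 1%N /\ m = 1%N /\ b = 0%N by lia.
  by rewrite b0 !bin0 n1 m1 divr1 expr1n invr1.
rewrite !natrM -mulrA -expr2.
have a_le : (2 * a <= n + 5)%N by rewrite /a; lia.
have b_ge := filter_b_ge R m (ltnW m_ge2).
have := union_bound_le R m n b a m_ge2 n_le_m (ltnW b_lt_n) a_le b_ge.
by apply: le_trans; rewrite ler_wpM2l ?exprn_ge0 // bin_ratio_le // leq_subr.
Qed.
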